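(* Let $1\le p\le q$. If $(p,q)$ does not satisfy $q=p\ge3$, then $\mathfrak{D}(K_{p,q})$ is unique: for every graph $G$ with no isolated vertices, $\mathfrak{D}(G)\cong\mathfrak{D}(K_{p,q})$ implies $G\cong K_{p,q}$. If $p=q\ge3$ and $G$ is a graph with no isolated vertices with $\mathfrak{D}(G)\cong\mathfrak{D}(K_{p,p})$, then $G\cong K_{p,p}$ or $G\cong K_p\,\Box\,K_2$ (and indeed $\mathfrak{D}(K_p\Box K_2)\cong\mathfrak{D}(K_{p,p})$).
   Context: All graphs are finite, simple, undirected. A set $S\subseteq V(G)$ is a dominating set if every vertex of $G$ is in $S$ or adjacent to a vertex of $S$. The domination TAR graph $\mathfrak{D}(G)$ has as vertices the dominating sets of $G$, with $S_1S_2$ an edge iff $|S_1\ominus S_2|=1$ (symmetric difference). $K_{p,q}$ is the complete bipartite graph with parts of sizes $p$ and $q$; $\Box$ is the Cartesian product. *)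

From mathcomp Require Import all_boot.
Set Implicit Arguments. Unset Strict Implicit. Unset Printing Implicit Defensive.

Definition simple_graph (T : finType) (e : rel T) : Prop :=
  symmetric e /\ irreflexive e.

Definition no_isolated (T : finType) (e : rel T) : Prop :=
  forall x : T, exists y : T, e x y.

Definition graph_iso (V1 V2 : finType) (r1 : rel V1) (r2 : rel V2) : Prop :=
  exists f : V1 -> V2, bijective f /\ forall x y, r2 (f x) (f y) = r1 x y.

Definition dominating (T : finType) (e : rel T) (S : {set T}) : bool :=
  [forall x, (x \in S) || [exists y in S, e x y]].

Definition domset (T : finType) (e : rel T) : finType :=
  {S : {set T} | dominating e S}.

Definition symdiff (T : finType) (A B : {set T}) : {set T} :=
  (A :\: B) :|: (B :\: A).

Definition tar_rel (T : finType) (e : rel T) : rel (domset e) :=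
  fun S1 S2 => #|symdiff (val S1) (val S2)| == 1.

Definition Kpq_rel (p q : nat) : rel ('I_p + 'I_q)%type :=
  fun x y => match x, y with
             | inl _, inr _ | inr _, inl _ => true
             | _, _ => false
             end.

Definition KpK2_rel (p : nat) : rel ('I_p * bool)%type :=
  fun x y => ((x.1 == y.1) && (x.2 != y.2)) || ((x.1 != y.1) && (x.2 == y.2)).

Arguments tar_rel {T} e.
Arguments graph_iso {V1 V2} r1 r2.
Arguments dominating {T} e S.
Arguments simple_graph {T} e.
Arguments no_isolated {T} e.
Arguments Kpq_rel p q : clear implicits.
Arguments KpK2_rel p : clear implicits.

From mathcomp Require Import all_boot.
Set Implicit Arguments. Unset Strict Implicit. Unset Printing Implicit Defensive.

(* A TAR isomorphism F between D(G) and D(H) is induced by a vertex bijection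
   preserving dominating sets.  Label each vertex v of G by the unique vertex
   sigma v in the one-element set F(V) (+) F(V - v).  Opposite sides of a
   square of the hypercube flip the same element, so, by downward induction,
   every edge S -- S + v of D(G) is sent to an edge flipping sigma v; hence
   F S = F(V) (+) sigma(V - S), and comparing F(V) with the dominating sets
   V - x and the non-neighbourhoods of vertices shows F(V) = sigma(V), so
   F S = sigma(S).

   Dominating sets determine the inclusion-minimal closed neighbourhoods.  In
   K_{p,q} with p, q >= 2 all closed neighbourhoods are minimal, so a graph G
   on the same vertices with the same dominating sets has N_G[v] = N_K[t v]
   for a permutation t.  Either t is the identity and G = K_{p,q}, or t has no
   fixed point and swaps the two sides, which forces p = q and turns G into
   two cliques joined by a perfect matching, the prism K_p [] K_2.  For the
   star K_{1,q} the dominating sets force the edges directly, and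
   K_2 [] K_2 = C_4 = K_{2,2}. *)

Section SymmetricDifference.
Variable T : finType.
Implicit Types A B C D X : {set T}.

Lemma in_symdiff A B x : (x \in symdiff A B) = (x \in A) (+) (x \in B).
Proof. by rewrite !inE; case: (x \in A); case: (x \in B). Qed.

Lemma symdiffC A B : symdiff A B = symdiff B A.
Proof. by apply/setP=> x; rewrite !in_symdiff addbC. Qed.

Lemma symdiff_mem A B C x : symdiff A B = C -> (x \in B) = (x \in A) (+) (x \in C).
Proof. by move=> <-; rewrite in_symdiff; case: (x \in A); case: (x \in B). Qed.

Lemma symdiff_setU1 X v : v \notin X -> symdiff X (v |: X) = [set v].
Proof.
move=> vX; apply/setP=> x; rewrite in_symdiff !inE.
by case: (eqVneq x v) => [->|]; rewrite ?(negbTE vX) //= addbb.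
Qed.

Lemma symdiff1_square A B C D i j k l :
  symdiff A B = [set i] -> symdiff B C = [set j] -> symdiff C D = [set k] ->
  symdiff D A = [set l] -> A != C -> B != D -> i = k.
Proof.
move=> hAB hBC hCD hDA nAC nBD.
have flip X Y a x : symdiff X Y = [set a] -> (x \in Y) = (x \in X) (+) (x == a).
  by move/symdiff_mem=> ->; rewrite in_set1.
have ij : i != j.
  apply: contra nAC => /eqP ij; apply/eqP/setP => x.
  by rewrite (flip _ _ _ _ hBC) (flip _ _ _ _ hAB) ij -addbA addbb addbF.
have il : i != l.
  apply: contra nBD => /eqP il; apply/eqP/setP => x.
  rewrite symdiffC in hDA.
  by rewrite (flip _ _ _ _ hDA) (flip _ _ _ _ hAB) il.
have := flip _ _ _ i hAB; have := flip _ _ _ i hBC; have := flip _ _ _ i hCD.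
have := flip _ _ _ i hDA; rewrite eqxx (negbTE ij) (negbTE il).
case: (eqVneq i k) => // _.
by case: (i \in A); case: (i \in B); case: (i \in C); case: (i \in D).
Qed.

End SymmetricDifference.

Lemma set_down_ind (T : finType) (P : {set T} -> Prop) :
  (forall X : {set T}, (forall w, w \notin X -> P (w |: X)) -> P X) -> forall X, P X.
Proof.
move=> IH X; move: {2}#|~: X| (leqnn #|~: X|) => n; elim: n X => [|n IHn] X hX.
  apply: IH => w wX.
  by move: hX; rewrite leqn0 => /eqP/cards0_eq/setP/(_ w); rewrite !inE wX.
apply: IH => w wX; apply: IHn.
rewrite -ltnS (leq_trans _ hX) // [ltnRHS](cardsD1 w) inE wX add1n ltnS.
by apply: subset_leq_card; apply/subsetP => x; rewrite !inE negb_or andbC.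
Qed.

Definition closed_nbhd (T : finType) (e : rel T) (x : T) : {set T} :=
  [set y | (y == x) || e x y].

Section Domination.
Variables (T : finType) (e : rel T).
Implicit Types A B : {set T}.

Lemma dominatingP A :
  reflect (forall x, exists2 y, y \in A & y \in closed_nbhd e x) (dominating e A).
Proof.
apply: (iffP forallP) => H x.
  case/orP: (H x) => [xA|/existsP[y /andP[yA exy]]].
    by exists x; rewrite // inE eqxx.
  by exists y; rewrite // inE exy orbT.
case: (H x) => y yA; rewrite inE => /orP[/eqP<-|exy]; first by rewrite yA.
by apply/orP; right; apply/existsP; exists y; rewrite yA.
Qed.

Lemma dominatingPn A :
  reflect (exists v, forall y, y \in closed_nbhd e v -> y \notin A)
          (~~ dominating e A).
Proof.
apply: (iffP idP) => [|[v Hv]]; last first.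
  by apply/dominatingP => D; case: (D v) => y yA /Hv; rewrite yA.
move=> /forallPn[v]; rewrite negb_or negb_exists => /andP[vA /forallP H].
exists v => y; rewrite inE => /orP[/eqP->//|evy].
by apply/negP=> yA; move: (H y); rewrite yA evy.
Qed.

Lemma dominatingS A B : A \subset B -> dominating e A -> dominating e B.
Proof.
move=> sAB /dominatingP H; apply/dominatingP => x.
by case: (H x) => y yA yN; exists y => //; apply: (subsetP sAB).
Qed.

Lemma dominatingT : dominating e setT.
Proof. by apply/dominatingP => x; exists x; rewrite ?inE ?eqxx. Qed.

Lemma dominating_setD1 v :
  irreflexive e -> no_isolated e -> dominating e (setT :\ v).
Proof.
move=> eirr noiso; apply/dominatingP => x; case: (eqVneq x v) => [->|xv].
  case: (noiso v) => y evy; exists y; last by rewrite inE evy orbT.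
  by rewrite !inE andbT; apply: contraTneq evy => ->; rewrite eirr.
by exists x; rewrite !inE ?xv ?eqxx.
Qed.

End Domination.

(* The complement of N_r[x] does not dominate for r, hence not for e either. *)
Lemma same_dominating_nbhd_sub (T : finType) (e r : rel T) :
  (forall A, dominating e A = dominating r A) ->
  forall x, exists v, closed_nbhd e v \subset closed_nbhd r x.
Proof.
move=> H x.
have : ~~ dominating r (~: closed_nbhd r x).
  by apply/dominatingPn; exists x => y yN; rewrite inE yN.
rewrite -H => /dominatingPn[v Hv]; exists v; apply/subsetP => y /Hv.
by rewrite inE negbK.
Qed.

Section TarIsoDomination.
Variables (T U : finType) (e : rel T) (r : rel U).
Hypotheses (e_simple : simple_graph e) (e_noiso : no_isolated e).
Hypotheses (r_irr : irreflexive r) (r_noiso : no_isolated r).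

Variable F : {set T} -> {set U}.
Hypothesis F_dom : forall S, dominating e S -> dominating r (F S).
Hypothesis F_inj :
  forall S S', dominating e S -> dominating e S' -> F S = F S' -> S = S'.
Hypothesis F_surj : forall Y, dominating r Y -> exists2 S, dominating e S & F S = Y.
Hypothesis F_flip : forall S v, dominating e S -> v \notin S ->
  exists i, symdiff (F S) (F (v |: S)) = [set i].

Variable sigma : T -> U.
Hypothesis sigma_flip :
  forall v, symdiff (F setT) (F (setT :\ v)) = [set sigma v].

Let dom_setD1 v := dominating_setD1 v e_simple.2 e_noiso.

Lemma F_flip_sigma X v : dominating e X -> v \notin X ->
  symdiff (F X) (F (v |: X)) = [set sigma v].
Proof.
elim/set_down_ind: X => X IH dX vX.
case: (set_0Vmem (~: (v |: X))) => [/(congr1 (@setC _)) | [w]].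
  rewrite setCK setC0 => vXT.
  suff -> : X = setT :\ v by rewrite setD1K ?inE // symdiffC.
  by rewrite -vXT setU1K.
rewrite inE => Hw.
have wv : w != v by apply: contraNneq Hw => ->; rewrite setU11.
have wX : w \notin X by apply: contra Hw => wX; rewrite inE wX orbT.
have vwX : v \notin w |: X by rewrite !inE negb_or eq_sym wv.
have dvX : dominating e (v |: X) by apply: dominatingS dX; apply: subsetUr.
have dwX : dominating e (w |: X) by apply: dominatingS dX; apply: subsetUr.
have dvwX : dominating e (v |: (w |: X)).
  by apply: dominatingS dwX; apply: subsetUr.
have [i hAB] := F_flip dX vX.
have [j hBC] : exists j, symdiff (F (v |: X)) (F (v |: (w |: X))) = [set j].
  by rewrite setUCA; apply: F_flip; rewrite // !inE negb_or wv.
have hCD : symdiff (F (v |: (w |: X))) (F (w |: X)) = [set sigma v].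
  by rewrite symdiffC; apply: IH.
have [l hDA] : exists l, symdiff (F (w |: X)) (F X) = [set l].
  by have [l hl] := F_flip dX wX; exists l; rewrite symdiffC.
rewrite hAB (symdiff1_square hAB hBC hCD hDA) //.
  apply: contraNneq vX => /(F_inj dX dvwX) ->.
  by rewrite setU11.
apply: contraNneq vwX => /(F_inj dvX dwX) <-.
by rewrite setU11.
Qed.

Lemma sigma_inj : injective sigma.
Proof.
move=> v w E.
have FsetD1 x : F (setT :\ x) = symdiff (F setT) [set sigma x].
  by apply/setP=> y; rewrite (symdiff_mem y (sigma_flip x)) in_symdiff addbC.
have := FsetD1 v; rewrite E -FsetD1 => /(F_inj (dom_setD1 _) (dom_setD1 _)).
by move=> /setP/(_ v); rewrite !inE eqxx /=; case: eqVneq.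
Qed.

Lemma F_symdiff S :
  dominating e S -> F S = symdiff (F setT) (sigma @: ~: S).
Proof.
elim/set_down_ind: S => S IH dS.
case: (set_0Vmem (~: S)) => [CS0 | [v]].
  rewrite CS0 imset0; have -> : S = setT by rewrite -[S]setCK CS0 setC0.
  by apply/setP=> x; rewrite in_symdiff inE addbF.
rewrite inE => vS.
have dvS : dominating e (v |: S) by apply: dominatingS dS; apply: subsetUr.
have CS : ~: S = v |: ~: (v |: S).
  by apply/setP=> x; rewrite !inE; case: (eqVneq x v) => [->|].
have nsv : sigma v \notin sigma @: ~: (v |: S).
  by rewrite mem_imset ?inE ?eqxx //; apply: sigma_inj.
have flip := F_flip_sigma dS vS; rewrite symdiffC in flip.
apply/setP=> x; rewrite (symdiff_mem x flip) IH // !in_symdiff CS imsetU1.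
rewrite in_setU1 in_set1; case: (eqVneq x (sigma v)) => [->|_].
  by rewrite (negbTE nsv) addbF.
by rewrite /= addbF.
Qed.

Lemma mem_F_sigma S y : dominating e S ->
  (sigma y \in F S) = (sigma y \in F setT) (+) (y \notin S).
Proof.
by move=> dS; rewrite (F_symdiff dS) in_symdiff mem_imset ?inE //; apply: sigma_inj.
Qed.

Lemma mem_F_notin_image S x : dominating e S -> (forall y, sigma y != x) ->
  (x \in F S) = (x \in F setT).
Proof.
move=> dS nx; rewrite (F_symdiff dS) in_symdiff.
by case: imsetP => [[y _ E]|_]; [move: (nx y); rewrite -E eqxx | rewrite addbF].
Qed.

(* Otherwise, with S the non-neighbours of a, sigma a |: F S is F (S :\ a),
   although S :\ a misses N[a]. *)
Lemma sigma_in_FT a : sigma a \in F setT.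
Proof.
have [e_sym e_irr] := e_simple.
apply/negPn/negP => na.
set S := [set y | ~~ e a y].
have dS : dominating e S.
  apply/dominatingP => x; case: (boolP (e a x)) => eax.
    by exists a; rewrite !inE ?e_irr // e_sym eax orbT.
  by exists x; rewrite !inE ?eax ?eqxx.
have [S' dS' ES'] := F_surj (dominatingS (subsetUr [set sigma a] (F S)) (F_dom dS)).
have S'S y : y != a -> (y \in S') = (y \in S).
  move=> ya; have := mem_F_sigma y dS'; rewrite ES' in_setU1 (inj_eq sigma_inj).
  rewrite (negbTE ya) /= (mem_F_sigma y dS).
  by case: (sigma y \in F setT); case: (y \in S); case: (y \in S').
suff : ~~ dominating e S' by rewrite dS'.
apply/dominatingPn; exists a => y; rewrite inE => /orP[/eqP->|eay].
  by have := mem_F_sigma a dS'; rewrite ES' setU11 (negbTE na) /= => <-.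
have ya : y != a by apply: contraTneq eay => ->; rewrite e_irr.
by rewrite S'S // inE eay.
Qed.

Lemma FT_sub_image x : x \in F setT -> exists y, sigma y = x.
Proof.
move=> xT; case: (pickP (fun y => sigma y == x)) => [y /eqP | nx]; first by exists y.
have {}nx y : sigma y != x by rewrite nx.
have [S' dS' ES'] := F_surj (dominating_setD1 x r_irr r_noiso).
by have := mem_F_notin_image dS' nx; rewrite ES' xT !inE eqxx.
Qed.

Lemma F_imset S : dominating e S -> F S = sigma @: S.
Proof.
move=> dS; apply/setP=> x.
case: (boolP [exists y, sigma y == x]) => [/existsP[y /eqP <-] | nx].
  by rewrite mem_F_sigma // sigma_in_FT (mem_imset _ _ sigma_inj) /= negbK.
have {}nx y : sigma y != x by apply: contraNneq nx => <-; apply/existsP; exists y.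
rewrite mem_F_notin_image //.
by apply/idP/imsetP => [/FT_sub_image[y] | [y _ /esym]] /eqP; rewrite (negbTE (nx y)).
Qed.

Lemma sigma_bij : bijective sigma.
Proof.
apply: (inj_card_bij sigma_inj).
have [S dS FS] := F_surj (dominatingT r).
by rewrite -cardsT -FS F_imset // card_imset //; [apply: max_card | apply: sigma_inj].
Qed.

Lemma dominating_sigma S : dominating e S = dominating r (sigma @: S).
Proof.
apply/idP/idP => [dS | dY]; first by rewrite -F_imset //; apply: F_dom.
have [S' dS' E] := F_surj dY; rewrite F_imset // in E.
by rewrite -(imset_inj sigma_inj E).
Qed.

End TarIsoDomination.

Lemma tar_iso_dominating_bij (T U : finType) (e : rel T) (r : rel U) :
  simple_graph e -> no_isolated e -> simple_graph r -> no_isolated r ->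
  graph_iso (tar_rel e) (tar_rel r) ->
  exists2 sigma : T -> U, bijective sigma &
    forall S, dominating e S = dominating r (sigma @: S).
Proof.
move=> se ne [_ r_irr] nr [phi [[psi phiK psiK] phi_tar]].
pose F S := if insub S is Some X then val (phi X) else set0.
have FE S (dS : dominating e S) : F S = val (phi (exist _ S dS)).
  by rewrite /F insubT.
have F_dom S : dominating e S -> dominating r (F S).
  by move=> dS; rewrite (FE S dS); apply: valP.
have F_inj S S' : dominating e S -> dominating e S' -> F S = F S' -> S = S'.
  move=> dS dS'; rewrite (FE S dS) (FE S' dS') => /val_inj/(can_inj phiK).
  by move/(congr1 val).
have F_surj Y : dominating r Y -> exists2 S, dominating e S & F S = Y.
  move=> dY; case E: (psi (exist _ Y dY)) => [X dX]; exists X => //.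
  by rewrite (FE X dX) -E psiK.
have F_flip S v : dominating e S -> v \notin S ->
    exists i, symdiff (F S) (F (v |: S)) = [set i].
  move=> dS vS; have dvS := dominatingS (subsetUr [set v] S) dS.
  apply/cards1P; rewrite (FE S dS) (FE _ dvS).
  have := phi_tar (exist _ S dS) (exist _ (v |: S) dvS).
  by rewrite /tar_rel /= symdiff_setU1 // cards1 eqxx => ->.
have [sigma sigma_flip] :
    exists sigma : T -> U, forall v, symdiff (F setT) (F (setT :\ v)) = [set sigma v].
  apply: (@fin_all_exists _ (fun=> U)
    (fun v i => symdiff (F setT) (F (setT :\ v)) = [set i])) => v.
  rewrite symdiffC -{2}(setD1K (in_setT v)).
  by apply: F_flip; rewrite ?inE ?eqxx //; apply: dominating_setD1 => //; case: se.
have := sigma_bij se ne r_irr nr F_dom F_inj F_surj F_flip sigma_flip.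
by exists sigma => //; apply: (dominating_sigma se ne r_irr nr F_dom F_inj F_surj F_flip).
Qed.

Lemma imsetK (T U : finType) (f : T -> U) (g : U -> T) (A : {set T}) :
  cancel f g -> g @: (f @: A) = A.
Proof. by move=> fK; rewrite -imset_comp (eq_imset _ fK) imset_id. Qed.

Lemma graph_iso_trans (V1 V2 V3 : finType) (r1 : rel V1) (r2 : rel V2) (r3 : rel V3) :
  graph_iso r1 r2 -> graph_iso r2 r3 -> graph_iso r1 r3.
Proof.
move=> [f [bf Hf]] [g [bg Hg]]; exists (g \o f); split; first exact: bij_comp.
by move=> x y; rewrite /= Hg Hf.
Qed.

Lemma graph_iso_eq (V : finType) (r1 r2 : rel V) : r1 =2 r2 -> graph_iso r1 r2.
Proof. by move=> H; exists id; split; [exists id | move=> x y; rewrite H]. Qed.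

Lemma graph_iso_relpre (T U : finType) (e : rel T) (f : T -> U) (g : U -> T) :
  cancel f g -> cancel g f -> graph_iso e (relpre g e).
Proof. by move=> fK gK; exists f; split; [exists g | move=> x y /=; rewrite !fK]. Qed.

(* Dominating sets are the transversals of the family of closed neighbourhoods,
   so only that family matters. *)
Lemma dominating_imset (T U : finType) (e : rel T) (r : rel U) (g : T -> U) (h : T -> T) :
  bijective g -> bijective h ->
  (forall x y, (g y \in closed_nbhd r (g x)) = (y \in closed_nbhd e (h x))) ->
  forall S : {set T}, dominating r (g @: S) = dominating e S.
Proof.
move=> [gi _ giK] [hi _ hiK] H S; apply/dominatingP/dominatingP => D x.
  case: (D (g (hi x))) => z /imsetP[y yS ->]; rewrite H hiK => yN.
  by exists y.
case: (D (h (gi x))) => y yS; rewrite -H giK => yN.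
by exists (g y); first exact: imset_f.
Qed.

Lemma tar_iso_of_dominating (T U : finType) (e : rel T) (r : rel U) (g : T -> U) :
  bijective g -> (forall S : {set T}, dominating r (g @: S) = dominating e S) ->
  graph_iso (tar_rel e) (tar_rel r).
Proof.
move=> bg H; have [gi gK giK] := bg; have g_inj := bij_inj bg.
have dg (X : domset e) : dominating r (g @: val X) by rewrite H; apply: valP.
have dgi (Y : domset r) : dominating e (gi @: val Y).
  by rewrite -H imsetK //; apply: valP.
exists (fun X : domset e => exist _ (g @: val X) (dg X) : domset r); split.
  by exists (fun Y : domset r => exist _ (gi @: val Y) (dgi Y) : domset e) => Z;
    apply: val_inj; rewrite /= imsetK.
have sd (A B : {set T}) : symdiff (g @: A) (g @: B) = g @: symdiff A B.
  by apply/setP=> z; rewrite -[z]giK in_symdiff !mem_imset ?in_symdiff.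
by move=> X Y; rewrite /tar_rel /= sd card_imset.
Qed.

Lemma Kpq_simple p q : simple_graph (Kpq_rel p q).
Proof. by split; [case=> x [] y | case]. Qed.

Lemma Kpq_no_isolated p q : 0 < p -> 0 < q -> no_isolated (Kpq_rel p q).
Proof. by move=> p0 q0 [x|y]; [exists (inr (Ordinal q0)) | exists (inl (Ordinal p0))]. Qed.

(* In a graph with the dominating sets of the star, the centre dominates alone,
   and an edge between leaves j, j' would let everything but the centre and j'
   dominate. *)
Lemma star_same_dominating q (e : rel ('I_1 + 'I_q)) : simple_graph e ->
  (forall A, dominating e A = dominating (Kpq_rel 1 q) A) -> e =2 Kpq_rel 1 q.
Proof.
move=> [e_sym e_irr] H; set c : 'I_1 + 'I_q := inl ord0.
have cE i : inl i = c by rewrite /c (ord1 i).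
have leaf_c j : e (inr j) c.
  have : dominating e [set c].
    rewrite H; apply/dominatingP => -[i|j']; exists c; rewrite ?inE ?cE ?eqxx //.
  by move/dominatingP/(_ (inr j)) => [y]; rewrite !inE => /eqP->.
have leaves j j' : ~~ e (inr j) (inr j').
  apply/negP => ejj'; have jj' : inr j != inr j' :> 'I_1 + 'I_q.
    by apply: contraTneq ejj' => ->; rewrite e_irr.
  have : dominating e (~: [set c; inr j']).
    apply/dominatingP => x; have [xS|xS] := boolP (x \in [set c; inr j']); last first.
      by exists x; [rewrite in_setC | rewrite inE eqxx].
    exists (inr j); first by rewrite !inE negb_or jj'.
    by case/set2P: xS => ->; rewrite inE e_sym ?leaf_c ?ejj' orbT.
  rewrite H => /dominatingP/(_ (inr j'))[y]; rewrite !inE negb_or.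
  by case: y => [i|k]; rewrite ?cE ?eqxx ?andbF //= orbF => /negbTE->.
move=> [i|j] [i'|j']; rewrite ?cE /=.
- by rewrite e_irr.
- by rewrite e_sym leaf_c.
- by rewrite leaf_c.
- exact: negbTE.
Qed.

Lemma exists_neq (T : finType) (x : T) : 1 < #|T| -> exists y, y != x.
Proof.
move=> h; have /card_gt0P[y] : 0 < #|predC1 x| by rewrite cardC1 -ltnS (ltn_predK h).
by exists y.
Qed.

Lemma Kpq_nbhd_antichain p q (x y : 'I_p + 'I_q) : 1 < p -> 1 < q ->
  closed_nbhd (Kpq_rel p q) y \subset closed_nbhd (Kpq_rel p q) x -> y = x.
Proof.
move=> hp hq /subsetP S.
case: x S => [i|j] S; case: y S => [i'|j'] S.
- by have := S (inl i'); rewrite !inE eqxx /= orbF => /(_ isT) /eqP->.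
- have [i2 ne] : exists i2, i2 != i by apply: exists_neq; rewrite card_ord.
  have := S (inl i2); rewrite !inE /= orbF => /(_ isT) /eqP[E].
  by rewrite E eqxx in ne.
- have [j2 ne] : exists j2, j2 != j by apply: exists_neq; rewrite card_ord.
  have := S (inr j2); rewrite !inE /= orbF => /(_ isT) /eqP[E].
  by rewrite E eqxx in ne.
- by have := S (inr j'); rewrite !inE eqxx /= orbF => /(_ isT) /eqP->.
Qed.

(* Every closed neighbourhood of r contains one of e and conversely, so when
   those of r form an antichain each of them is a closed neighbourhood of e. *)
Lemma same_dominating_nbhd_perm (T : finType) (e r : rel T) :
  (forall A, dominating e A = dominating r A) ->
  (forall x y, closed_nbhd r y \subset closed_nbhd r x -> y = x) ->
  exists2 t : T -> T, injective t & forall v, closed_nbhd e v = closed_nbhd r (t v).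
Proof.
move=> H anti.
have [f fE] : exists f : T -> T, forall x, closed_nbhd e (f x) = closed_nbhd r x.
  apply: (@fin_all_exists _ (fun=> T) (fun x v => closed_nbhd e v = closed_nbhd r x)).
  move=> x; have [v Hv] := same_dominating_nbhd_sub H x.
  have [y Hy] := same_dominating_nbhd_sub (fun A => esym (H A)) v.
  have yx := anti _ _ (subset_trans Hy Hv); subst y.
  by exists v; apply/eqP; rewrite eqEsubset Hv.
have f_inj : injective f.
  by move=> x y Exy; apply: anti; rewrite -fE Exy fE.
have [t fK tK] := injF_bij f_inj.
by exists t; [apply: can_inj tK | move=> v; rewrite -{1}(tK v) fE].
Qed.

Section ShiftedNeighbourhoods.
Variables (p q : nat) (e : rel ('I_p + 'I_q)) (t : 'I_p + 'I_q -> 'I_p + 'I_q).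
Hypotheses (e_sym : symmetric e) (e_irr : irreflexive e) (t_inj : injective t).
Hypothesis t_nbhd : forall v, closed_nbhd e v = closed_nbhd (Kpq_rel p q) (t v).
Local Notation K := (Kpq_rel p q).

Lemma t_nbhdE v y : (y == v) || e v y = (y == t v) || K (t v) y.
Proof. by have /setP/(_ y) := t_nbhd v; rewrite !inE. Qed.

Lemma t_fixed_or_adj v : t v = v \/ K (t v) v.
Proof. by have := t_nbhdE v v; rewrite eqxx => /esym/orP[/eqP|]; [left | right]. Qed.

Lemma t_id_nbhd : (forall v, t v = v) -> e =2 K.
Proof.
move=> tid x y; case: (eqVneq y x) => [->|yx]; first by rewrite e_irr; case: x.
by have := t_nbhdE x y; rewrite tid (negbTE yx).
Qed.

(* If t v is the K-neighbour of v, then every other u on the side of v is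
   adjacent to v, so v lies in N[t u] and t u cannot be u. *)
Lemma t_unfixed_side u v : t v != v -> ~~ K u v -> t u != u.
Proof.
move=> tv Kuv; case: (eqVneq u v) => [->//|uv].
have Ktv : K (t v) v by case: (t_fixed_or_adj v) => // E; rewrite E eqxx in tv.
have Ktu : K (t v) u.
  by move: Ktv Kuv; case: (t v) => ?; case: u {uv} => ?; case: v {tv} => ?.
have evu : e v u by have := t_nbhdE v u; rewrite Ktu orbT (negbTE uv).
apply: contraNneq Kuv => tu; have := t_nbhdE u v.
by rewrite tu e_sym evu orbT eq_sym (negbTE uv).
Qed.

(* The preimage w of v0 lies across from v0, and every vertex is on the side
   of v0 or on the side of w. *)
Lemma t_fixfree v0 : t v0 != v0 -> forall v, t v != v.
Proof.
move=> tv0; have [ti tK tiK] := injF_bij t_inj; set w := ti v0.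
have K_sym := (Kpq_simple p q).1.
have Kv0w : K v0 w.
  apply: contraT => nK; have : t w != w by apply: (t_unfixed_side tv0); rewrite K_sym.
  by case: (t_fixed_or_adj w) => [->|]; rewrite /w ?eqxx // tiK (negbTE nK).
have tw : t w != w.
  by rewrite /w tiK; apply: contraTneq Kv0w; rewrite /w => <-; case: v0 {tv0 w}.
clearbody w; move=> v; have [Kvv0|] := boolP (K v v0); last exact: t_unfixed_side.
apply: (t_unfixed_side tw).
by move: Kvv0 Kv0w; case: v => ?; case: v0 {tv0} => ?; case: w {tw} => ?.
Qed.
Lemma t_fixfree_prism : (forall v, t v != v) -> p = q /\ graph_iso e (KpK2_rel p).
Proof.
move=> tfree.
have tK v : K (t v) v by case: (t_fixed_or_adj v) => // E; have := tfree v; rewrite E eqxx.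
have [hL hLE] : exists hL : 'I_p -> 'I_q, forall i, t (inl i) = inr (hL i).
  apply: (@fin_all_exists _ (fun=> 'I_q) (fun i j => t (inl i) = inr j)) => i.
  by move: (tK (inl i)); case: (t (inl i)) => // j _; exists j.
have [hR hRE] : exists hR : 'I_q -> 'I_p, forall j, t (inr j) = inl (hR j).
  apply: (@fin_all_exists _ (fun=> 'I_p) (fun j i => t (inr j) = inl i)) => j.
  by move: (tK (inr j)); case: (t (inr j)) => // i _; exists i.
have hL_inj : injective hL.
  by move=> a b E; have /t_inj[] : t (inl a) = t (inl b) by rewrite !hLE E.
have hR_inj : injective hR.
  by move=> a b E; have /t_inj[] : t (inr a) = t (inr b) by rewrite !hRE E.
have pq : p = q.
  apply/eqP; rewrite eqn_leq.
  by have := leq_card hL hL_inj; have := leq_card hR hR_inj; rewrite !card_ord => -> ->.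
split => //.
pose phi (x : 'I_p + 'I_q) : 'I_p * bool :=
  match x with inl i => (i, true) | inr j => (hR j, false) end.
exists phi; split.
  apply: inj_card_bij; last by rewrite card_prod card_sum !card_ord card_bool -pq muln2 addnn.
  by case=> [a|a] [b|b] //= [E]; rewrite ?E // (hR_inj _ _ E).
case=> [a|a] [b|b]; rewrite /KpK2_rel /= ?andbF ?andbT ?orbF.
- case: (eqVneq a b) => [<-|ab]; first by rewrite e_irr.
  have := t_nbhdE (inl a) (inl b).
  by rewrite hLE (inj_eq inl_inj) eq_sym (negbTE ab) /= => ->.
- by have := t_nbhdE (inr b) (inl a); rewrite hRE (inj_eq inl_inj) /= orbF e_sym => ->.
- by have := t_nbhdE (inr a) (inl b); rewrite hRE (inj_eq inl_inj) /= orbF eq_sym => ->.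
- rewrite (inj_eq hR_inj); case: (eqVneq a b) => [<-|ab]; first by rewrite e_irr.
  by have := t_nbhdE (inr a) (inr b); rewrite hRE (inj_eq inr_inj) eq_sym (negbTE ab) /= => ->.
Qed.

End ShiftedNeighbourhoods.

Lemma Kpq_same_dominating p q (e : rel ('I_p + 'I_q)) : 1 < p -> 1 < q ->
  simple_graph e -> (forall A, dominating e A = dominating (Kpq_rel p q) A) ->
  e =2 Kpq_rel p q \/ (p = q /\ graph_iso e (KpK2_rel p)).
Proof.
move=> hp hq [e_sym e_irr] H.
have [t t_inj t_nbhd] :=
  same_dominating_nbhd_perm H (fun x y => Kpq_nbhd_antichain hp hq).
case: (boolP [forall v, t v == v]) => [/forallP tid | /forallPn[v0 tv0]].
  by left; apply: (t_id_nbhd e_irr t_nbhd) => v; apply/eqP.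
by right; apply: (t_fixfree_prism e_sym e_irr t_inj t_nbhd); apply: t_fixfree tv0.
Qed.

(* Through g, the closed neighbourhoods of K_{p,p} are those of the prism,
   with the side flipped by h. *)
Lemma prism_tar_iso_Kpp p : graph_iso (tar_rel (KpK2_rel p)) (tar_rel (Kpq_rel p p)).
Proof.
pose g (x : 'I_p * bool) : 'I_p + 'I_p := if x.2 then inl x.1 else inr x.1.
pose h (x : 'I_p * bool) := (x.1, ~~ x.2).
have bg : bijective g.
  by exists (fun z => match z with inl i => (i, true) | inr i => (i, false) end);
    [case=> i [] | case].
have bh : bijective h by exists h; case=> i [].
apply: (tar_iso_of_dominating bg); apply: (dominating_imset bg bh).
case=> i [] [j []]; rewrite !inE /g /h /KpK2_rel /= ?(inj_eq inl_inj) ?(inj_eq inr_inj).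
all: by rewrite ?xpair_eqE ?andbT ?andbF ?orbF //= eq_sym; case: (i == j).
Qed.

(* K_2 [] K_2 is the 4-cycle: (0,b) and (1,~~b) go to the same side. *)
Lemma prism2_iso_K22 : graph_iso (KpK2_rel 2) (Kpq_rel 2 2).
Proof.
pose f (x : 'I_2 * bool) : 'I_2 + 'I_2 :=
  if x.2 == (x.1 == 0 :> nat) then inl x.1 else inr x.1.
pose g (z : 'I_2 + 'I_2) : 'I_2 * bool :=
  match z with inl i => (i, i == 0 :> nat) | inr i => (i, i != 0 :> nat) end.
exists f; split.
  exists g; last by case=> [[[|[|?]] ?]|[[|[|?]] ?]].
  by case=> [[[|[|?]] ?] []].
by case=> [[[|[|?]] ?] []]; case=> [[[|[|?]] ?] []].
Qed.

Lemma tar_iso_Kpq p q (T : finType) (e : rel T) : 0 < p -> p <= q ->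
  simple_graph e -> no_isolated e ->
  graph_iso (tar_rel e) (tar_rel (Kpq_rel p q)) ->
  graph_iso e (Kpq_rel p q) \/ [/\ p = q, 1 < p & graph_iso e (KpK2_rel p)].
Proof.
move=> p0 pq se ne iso; have q0 : 0 < q := leq_trans p0 pq.
have [sigma bs Hs] :=
  tar_iso_dominating_bij se ne (Kpq_simple p q) (Kpq_no_isolated p0 q0) iso.
have [si sK siK] := bs; set e' := relpre si e.
have iso_e' : graph_iso e e' := graph_iso_relpre e sK siK.
have se' : simple_graph e' by case: se => e_sym e_irr; split=> [x y|x]; rewrite /e' /=.
have dom_e' A : dominating e' A = dominating (Kpq_rel p q) A.
  rewrite -(@dominating_imset _ _ e' e si id) ?Hs.
  - by rewrite imsetK.
  - by exists sigma.
  - by exists id.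
  by move=> x y; rewrite !inE /e' /= (can_eq siK).
case: (ltnP 1 p) => [p1 | p_le1].
  have [E|[pq' H]] := Kpq_same_dominating p1 (leq_trans p1 pq) se' dom_e'.
    by left; apply: graph_iso_trans iso_e' (graph_iso_eq E).
  by right; split; last apply: graph_iso_trans iso_e' H.
have p_eq1 : p = 1 by apply/eqP; rewrite eqn_leq p_le1.
subst p; left; apply: graph_iso_trans iso_e' (graph_iso_eq _).
exact: star_same_dominating se' dom_e'.
Qed.

Unset Implicit Arguments.

Theorem proposition3p3 (p q : nat) :
  1 <= p -> p <= q ->
  (~ (q = p /\ 3 <= p) ->
     forall (T : finType) (e : rel T), simple_graph e -> no_isolated e ->
       graph_iso (tar_rel e) (tar_rel (Kpq_rel p q)) ->
       graph_iso e (Kpq_rel p q))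
  /\
  (q = p -> 3 <= p ->
     (forall (T : finType) (e : rel T), simple_graph e -> no_isolated e ->
        graph_iso (tar_rel e) (tar_rel (Kpq_rel p p)) ->
        graph_iso e (Kpq_rel p p) \/ graph_iso e (KpK2_rel p))
     /\ graph_iso (tar_rel (KpK2_rel p)) (tar_rel (Kpq_rel p p))).
Proof.
move=> p1 pq; split=> [not_Kpp T e se ne iso | qp p3].
  have [//|[pq' p_gt1 H]] := tar_iso_Kpq p1 pq se ne iso; subst q.
  have p2 : p = 2.
    by apply/eqP; rewrite eqn_leq p_gt1 andbT leqNgt; apply/negP => p3; apply: not_Kpp.
  by subst p; apply: graph_iso_trans H prism2_iso_K22.
subst q; split=> [T e se ne iso | ]; last exact: prism_tar_iso_Kpp.
by have [|[_ _ H]] := tar_iso_Kpq p1 (leqnn p) se ne iso; [left | right].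
Qed.
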